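(* Let $S=\{1,\ldots,n\}$, $\boldsymbol{P}(S)$ the set of partitions of $S$, and $\varrho(\mathcal{B})\ge0$ for $\mathcal{B}\in\boldsymbol{P}(S)$. Consider curves $a_t=\sum_{\mathcal{A}\in\boldsymbol{P}(S)}a_t(\mathcal{A})\,\mathcal{A}\in\mathbb{R}^{\boldsymbol{P}(S)}$ with initial value $a_0(\underline{1})=1$ and $a_0(\mathcal{A})=0$ for $\mathcal{A}\ne\underline 1$, where $\underline 1=\{S\}$. Then $a_t$ solves the system \[ \dot{a}_t = -\sum_{\mathcal{A}} \sum_{\mathcal{B}} \varrho(\mathcal{B})\, a_t(\mathcal{A})\, \mathcal{A} + \sum_{\mathcal{A}} \sum_{\mathcal{B} \succcurlyeq \mathcal{A}} \Bigg ( \prod_{i=1}^{|\mathcal{B}|}\sum_{\substack{\mathcal{C} \in \boldsymbol{P}(S) \\ \mathcal{C}|_{B_i} = \mathcal{A}|_{B_i}}} a_t(\mathcal{C}) \Bigg) \varrho (\mathcal{B})\, \mathcal{A} \] if and only if it solves the law of mass action of the chemical reaction network on species set $\boldsymbol{P}(S)$ consisting of the reactions \[ \sum_{j=1}^{|\mathcal{C}|}\mathcal{A}_j\xrightarrow{\ \varrho(\mathcal{C})/|\mathcal{C}|\ }\sum_{j=1}^{|\mathcal{C}|}\bigcup_{i=1}^{|\mathcal{C}|}\mathcal{A}_{i+j-1}|_{C_i}, \] one for every $\mathcal{C}=\{C_1,\ldots,C_{|\mathcal{C}|}\}\in\boldsymbol{P}(S)$ and every tuple $(\mathcal{A}_1,\ldots,\mathcal{A}_{|\mathcal{C}|})\in\boldsymbol{P}(S)^{|\mathcal{C}|}$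 (indices mod $|\mathcal{C}|$), namely \[ \dot{a}_t = \sum_{\mathcal{C}} \sum_{\mathcal{A}_1,\ldots,\mathcal{A}_{|\mathcal{C}|}} \frac{\varrho(\mathcal{C})}{|\mathcal{C}|}\, a_t (\mathcal{A}_1) \cdots a_t(\mathcal{A}_{|\mathcal{C}|}) \sum_{j = 1}^{|\mathcal{C}|} \Big ( \bigcup_{i=1}^{|\mathcal{C}|} \mathcal{A}_{i + j - 1}|_{C_i}- \mathcal{A}_j \Big ), \] all sums running over $\boldsymbol{P}(S)$.
   Context: A partition of $S$ is a set of pairwise disjoint nonempty blocks with union $S$; blocks of $\mathcal{B}$ are enumerated $B_1,\ldots,B_{|\mathcal{B}|}$ so that $B_1\ni1$ and $B_k$ contains the smallest element not in $B_1\cup\cdots\cup B_{k-1}$. $\mathcal{A}\preccurlyeq\mathcal{B}$ (equivalently $\mathcal{B}\succcurlyeq\mathcal{A}$) means every block of $\mathcal{A}$ is contained in a block of $\mathcal{B}$. For $U\subseteq S$, $\mathcal{A}|_U=\{A\cap U:A\in\mathcal{A}\}\setminus\{\varnothing\}$; a union $\bigcup_i\mathcal{A}_{i+j-1}|_{C_i}$ of partitions of the disjoint blocks $C_i$ is a partition of $S$. Vectors in $\mathbb{R}^{\boldsymbol{P}(S)}$ are formal sums with each partition identified with a standard basis vector. The law of mass action of a network of reactions $r_1+\cdots+r_m\xrightarrow{\kappa}s_1+\cdots+s_m$ is $\dot c_t=\sum\kappa\,c_t(r_1)\cdots c_t(r_m)(s_1+\cdots+s_m-r_1-\cdots-r_m)$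 summed over all reactions. *)

From HB Require Import structures.
From mathcomp Require Import all_boot all_order all_algebra.
Set Implicit Arguments. Unset Strict Implicit. Unset Printing Implicit Defensive.
Import Order.TTheory GRing.Theory Num.Theory.
Local Open Scope ring_scope.

(* S = {1,...,n} is modelled by 'I_n = {0,...,n-1}. *)
Notation Part n := {P : {set {set 'I_n}} | partition P [set: 'I_n]}.

(* the discrete partition (only used as an irrelevant default value) *)
Definition discrete_part (n : nat) : Part n :=
  exist _ (preim_partition (@id 'I_n) [set: 'I_n]) (preim_partitionP _ _).

Definition one_part_set n : {set {set 'I_n}} := [set [set: 'I_n]].

Definition restr n (A : {set {set 'I_n}}) (U : {set 'I_n}) : {set {set 'I_n}} :=
  [set X :&: U | X in A] :\ set0.

Definition refines n (A B : Part n) : bool :=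
  [forall X in val A, exists Y in val B, X \subset Y].

Definition minb n (X : {set 'I_n}) : nat := \big[minn/n]_(i in X) (val i).

(* the blocks B_1, ..., B_|B| of B, enumerated by increasing smallest element *)
Definition blocks n (B : Part n) : seq {set 'I_n} :=
  sort (fun X Y => (minb X <= minb Y)%N) (enum (val B)).

(* C_i  (0-based: i = 0, ..., |C|-1) *)
Definition blk n (C : Part n) (i : nat) : {set 'I_n} := nth set0 (blocks C) i.

Lemma cyc_proof k (i j : 'I_k) : ((i + j) %% k < k)%N.
Proof. apply: ltn_pmod; exact: leq_ltn_trans (leq0n i) (ltn_ord i). Qed.
Definition cyc k (i j : 'I_k) : 'I_k := Ordinal (cyc_proof i j).

(* bigcup_{i=1}^{|C|} A_{i+j-1}|_{C_i}  (0-based: A_{(i+j) mod |C|}) *)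
Definition glue_set n (C : Part n) (A : {ffun 'I_#|val C| -> Part n})
    (j : 'I_#|val C|) : {set {set 'I_n}} :=
  \bigcup_(i < #|val C|) restr (val (A (cyc i j))) (blk C i).
Arguments glue_set {n} C A j.

(* the same, as an element of P(S) (it is always a partition of S) *)
Definition glue n (C : Part n) (A : {ffun 'I_#|val C| -> Part n})
    (j : 'I_#|val C|) : Part n :=
  insubd (discrete_part n) (glue_set C A j).
Arguments glue {n} C A j.

Record reaction (T : Type) (R : Type) :=
  Reaction { reactants : seq T; products : seq T; rate : R }.

Definition mass_action (T : eqType) (R : pzRingType) (net : seq (reaction T R))
    (c : T -> R) (x : T) : R :=
  \sum_(r <- net) rate r * \prod_(y <- reactants r) c y *
     ((count_mem x (products r))%:R - (count_mem x (reactants r))%:R).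

Definition frag_reaction (R : fieldType) n (rho : Part n -> R) (C : Part n)
    (A : {ffun 'I_#|val C| -> Part n}) : reaction (Part n) R :=
  Reaction [seq A j | j <- enum 'I_#|val C|]
           [seq glue C A j | j <- enum 'I_#|val C|]
           (rho C / (#|val C|)%:R).
Arguments frag_reaction {R n} rho C A.

Definition frag_network (R : fieldType) n (rho : Part n -> R) :
    seq (reaction (Part n) R) :=
  flatten [seq [seq frag_reaction rho C A | A <- enum {ffun 'I_#|val C| -> Part n}]
          | C <- enum {: Part n}].

Definition frag_rhs (R : fieldType) n (rho : Part n -> R) (c : Part n -> R)
    (A : Part n) : R :=
  - (\sum_(B : Part n) rho B * c A)
  + \sum_(B : Part n | refines A B)
      (\prod_(X in val B) \sum_(C : Part n | restr (val C) X == restr (val A) X) c C)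
      * rho B.

From mathcomp Require Import all_classical all_reals all_analysis.

(* a solves dot a_t = F(a_t) for t > 0 (curves defined on [0, +oo)) *)
Definition solves (R : realType) (T : Type) (F : (T -> R) -> T -> R)
    (a : R -> T -> R) : Prop :=
  forall t : R, 0 < t -> forall A : T,
    derivable (fun s => a s A) t 1 /\ 'D_1 (fun s => a s A) t = F (a t) A.

(* Write M = \sum_A a(A) for the total mass.  For a fixed C with k blocks, the
   mass-action terms summed over all k-tuples (A_1, ..., A_k) factorise over
   the blocks of C once the cyclic shift of indices is undone; this identifies
   the mass-action field with the first field minus a(A) \sum_C rho(C)
   (M^(k-1) - 1).  Every reaction has as many products as reactants, so the
   mass-action field preserves M, while the first field gives
   M' = (M - 1) phi(M) for a polynomial phi.  As M(0) = 1, a Gronwall argument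
   gives M = 1 for all t > 0 in both cases, and there the two fields agree. *)

From HB Require Import structures.
From mathcomp Require Import all_boot all_order all_algebra.
From mathcomp Require Import ring.
Import Order.TTheory GRing.Theory Num.Theory.
Local Open Scope ring_scope.

Section Partitions.
Variable n : nat.
Implicit Types (C P x : Part n) (A : {set {set 'I_n}}) (U X Y Z : {set 'I_n}).

Lemma part_block_eq P X Y (v : 'I_n) :
  X \in val P -> Y \in val P -> v \in X -> v \in Y -> X = Y.
Proof.
have tP := partition_trivIset (valP P).
by move=> XP YP vX vY; rewrite -(def_pblock tP XP vX) (def_pblock tP YP vY).
Qed.
Arguments part_block_eq {P X Y v}.

Lemma part_cover P (v : 'I_n) : exists2 X, X \in val P & v \in X.
Proof.
have vP : v \in cover (val P) by rewrite (cover_partition (valP P)) inE.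
by exists (pblock (val P) v); rewrite ?pblock_mem ?mem_pblock.
Qed.

Lemma card_part_gt0 P : (0 < n)%N -> (0 < #|val P|)%N.
Proof.
move=> n_gt0; have [X XP _] := part_cover P (Ordinal n_gt0).
by apply/card_gt0P; exists X.
Qed.

Lemma refinesP x P :
  reflect (forall X, X \in val x -> exists2 Y, Y \in val P & X \subset Y)
          (refines x P).
Proof.
apply: (iffP forallP) => [xP X Xx|xP X].
  by have /implyP/(_ Xx)/existsP[Y /andP[YP XY]] := xP X; exists Y.
by apply/implyP => /xP[Y YP XY]; apply/existsP; exists Y; rewrite YP XY.
Qed.

Lemma restrP A U Z :
  reflect (Z != set0 /\ exists2 X, X \in A & Z = X :&: U) (Z \in restr A U).
Proof.
rewrite /restr in_setD1.
apply: (iffP andP) => [[Z0 /imsetP[X XA EZ]]|[Z0 [X XA EZ]]].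
  by split=> //; exists X.
by split=> //; apply/imsetP; exists X.
Qed.

Lemma size_blocks P : size (blocks P) = #|val P|.
Proof. by rewrite /blocks size_sort cardE. Qed.

Lemma mem_blocks P X : (X \in blocks P) = (X \in val P).
Proof. by rewrite /blocks mem_sort mem_enum. Qed.

Lemma blk_mem P (i : 'I_#|val P|) : blk P i \in val P.
Proof. by rewrite /blk -mem_blocks mem_nth ?size_blocks. Qed.
Arguments blk_mem {P}.

Lemma blk_inj P : injective (fun i : 'I_#|val P| => blk P i).
Proof.
move=> i j /eqP; rewrite /blk nth_uniq ?size_blocks ?sort_uniq ?enum_uniq //.
by move/eqP/val_inj.
Qed.

Lemma blk_surj P X : X \in val P -> exists i : 'I_#|val P|, blk P i = X.
Proof.
rewrite -mem_blocks => XP.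
have i_lt : (index X (blocks P) < #|val P|)%N by rewrite -size_blocks index_mem.
by exists (Ordinal i_lt); rewrite /blk nth_index.
Qed.
Arguments blk_surj {P X}.

Lemma blk_block_eq P (i j : 'I_#|val P|) (v : 'I_n) :
  v \in blk P i -> v \in blk P j -> i = j.
Proof.
by move=> vi vj; apply: blk_inj; apply: part_block_eq vi vj; apply: blk_mem.
Qed.
Arguments blk_block_eq {P i j v}.

Lemma big_blk (T : Type) (idx : T) (op : Monoid.com_law idx) P
    (f : {set 'I_n} -> T) :
  \big[op/idx]_(i < #|val P|) f (blk P i) = \big[op/idx]_(X in val P) f X.
Proof.
transitivity (\big[op/idx]_(X <- blocks P) f X).
  by rewrite (big_nth set0) size_blocks big_mkord.
by rewrite (perm_big (enum (val P))) ?big_enum ?perm_sort.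
Qed.

Definition patch P (F : 'I_#|val P| -> {set {set 'I_n}}) : {set {set 'I_n}} :=
  \bigcup_(i < #|val P|) restr (F i) (blk P i).

Lemma patchP P (F : 'I_#|val P| -> {set {set 'I_n}}) Z :
  reflect (exists i, Z \in restr (F i) (blk P i)) (Z \in patch P F).
Proof. by apply: (iffP bigcupP) => [[i _]|[i]]; exists i. Qed.

Lemma patch_sub P (F : 'I_#|val P| -> {set {set 'I_n}}) Z :
  Z \in patch P F -> exists2 X, X \in val P & Z \subset X.
Proof.
case/patchP=> i /restrP[_ [Y _ ->]].
by exists (blk P i); rewrite ?blk_mem ?subsetIr.
Qed.

Lemma restr_patch P (F : 'I_#|val P| -> {set {set 'I_n}}) (i : 'I_#|val P|) :
  restr (patch P F) (blk P i) = restr (F i) (blk P i).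
Proof.
apply/setP => W; apply/restrP/restrP => -[W0 [Z ZF EW]]; split=> //.
  case/patchP: ZF => j /restrP[_ [Y YF EZ]].
  have [v] := set0Pn _ W0; rewrite EW EZ !inE => /andP[/andP[_ vj] vi].
  have eji := blk_block_eq vj vi; subst j.
  by exists Y; rewrite // -setIA setIid.
exists W; last by rewrite EW -setIA setIid.
by apply/patchP; exists i; apply/restrP; split=> //; exists Z.
Qed.

Lemma patch_partition P (F : 'I_#|val P| -> Part n) :
  partition (patch P (fun i => val (F i))) [set: 'I_n].
Proof.
apply/and3P; split.
- apply/eqP/setP => v; rewrite inE.
  have [X XP vX] := part_cover P v; have [i EX] := blk_surj XP; subst X.
  have [Y YF vY] := part_cover (F i) v.
  apply/bigcupP; exists (Y :&: blk P i); last by rewrite inE vY vX.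
  apply/patchP; exists i; apply/restrP; split; last by exists Y.
  by apply/set0Pn; exists v; rewrite inE vY vX.
- apply/trivIsetP => Z1 Z2 /patchP[i1 /restrP[_ [Y1 Y1F ->]]].
  move=> /patchP[i2 /restrP[_ [Y2 Y2F ->]]] neqZ.
  rewrite -setI_eq0; apply/eqP/setP => v; rewrite !inE.
  apply/negP => /andP[/andP[vY1 vi1] /andP[vY2 vi2]].
  have ei := blk_block_eq vi1 vi2; subst i2.
  by move: neqZ; rewrite (part_block_eq Y1F Y2F vY1 vY2) eqxx.
- by apply/patchP => -[i /restrP[]]; rewrite eqxx.
Qed.

Lemma patch_restr x P : refines x P -> patch P (fun=> val x) = val x.
Proof.
move/refinesP=> xP; apply/setP => Z.
apply/patchP/idP => [[i /restrP[Z0 [Y Yx EZ]]]|Zx].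
  have [X XP YX] := xP Y Yx.
  have [v] := set0Pn _ Z0; rewrite EZ inE => /andP[vY vi].
  have EX := part_block_eq XP (blk_mem i) (subsetP YX v vY) vi; subst X.
  by rewrite (setIidPl YX).
have [X XP ZX] := xP Z Zx; have [i EX] := blk_surj XP.
exists i; apply/restrP; split; first exact: partition_neq0 (valP x) Zx.
by exists Z; rewrite // EX (setIidPl ZX).
Qed.
Arguments patch_restr {x P}.

Lemma glue_eqE C (A : {ffun 'I_#|val C| -> Part n}) (j : 'I_#|val C|) x :
  (glue C A j == x) =
  refines x C &&
  [forall i, restr (val (A (cyc i j))) (blk C i) == restr (val x) (blk C i)].
Proof.
rewrite -val_eqE val_insubd.
have -> : glue_set C A j = patch C (fun i => val (A (cyc i j))) by [].
rewrite (patch_partition _ (fun i => A (cyc i j))).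
apply/eqP/andP => [Ex|[xC /forallP eqF]].
  split; first by apply/refinesP => Z; rewrite -Ex => /patch_sub.
  by apply/forallP => i; rewrite -Ex restr_patch.
by rewrite -(patch_restr xC) /patch; apply: eq_bigr => i _; apply/eqP/eqF.
Qed.

End Partitions.

Lemma one_part_partition {n} :
  (0 < n)%N -> partition (one_part_set n) [set: 'I_n].
Proof.
move=> n_gt0; rewrite /partition cover1 trivIset1 eqxx inE eq_sym.
by apply/set0Pn; exists (Ordinal n_gt0).
Qed.

Lemma sum_one_part_indicator (R : pzSemiRingType) n : (0 < n)%N ->
  \sum_(A : Part n) (if val A == one_part_set n then 1 else 0) = 1 :> R.
Proof.
move=> n_gt0.
pose one : Part n := exist _ (one_part_set n) (one_part_partition n_gt0).
by rewrite (bigD1 one) //= eqxx big1 ?addr0 // => A neqA; rewrite ifN.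
Qed.

Lemma cyc_inj k (j : 'I_k) : injective (fun i : 'I_k => cyc i j).
Proof.
move=> i i' /(congr1 val) /= /eqP.
by rewrite eqn_modDr !modn_small ?ltn_ord // => /eqP /val_inj.
Qed.

Lemma sum_count_mem (T : finType) (s : seq T) :
  (\sum_x count_mem x s)%N = size s.
Proof.
elim: s => [|y s IHs] /=; first by rewrite big1.
rewrite big_split /= IHs (bigD1 y) //= eqxx big1 ?addn0 // => x /negbTE.
by rewrite eq_sym => ->.
Qed.

Section FfunSums.
Variable R : comPzRingType.

Lemma prodr_nat_forall (I : finType) (P : pred I) :
  \prod_i (P i)%:R = [forall i, P i]%:R :> R.
Proof.
have [/forallP PI|/forallPn[i Pi]] := boolP [forall i, P i].
  by rewrite big1 // => i _; rewrite PI.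
by rewrite (bigD1 i) //= (negbTE Pi) mul0r.
Qed.

Lemma sum_ffun_prod_inj (I T : finType) (f : I -> T -> R) (s : I -> I) :
  injective s ->
  \sum_(A : {ffun I -> T}) \prod_i f i (A (s i)) = \prod_i \sum_y f i y.
Proof.
move=> s_inj; have [s' sK s'K] := injF_bij s_inj.
pose h (A : {ffun I -> T}) : {ffun I -> T} := [ffun i => A (s i)].
have h_inj : injective h.
  move=> A B /ffunP hAB; apply/ffunP => i.
  by have := hAB (s' i); rewrite !ffunE s'K.
rewrite bigA_distr_bigA [RHS](reindex_inj h_inj).
by apply: eq_bigr => A _; apply: eq_bigr => i _; rewrite ffunE.
Qed.

Lemma sum_ffun_prod_at (I T : finType) (c : T -> R) (j : I) (x : T) :
  \sum_(A : {ffun I -> T}) (\prod_i c (A i)) * (A j == x)%:R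
  = c x * (\sum_y c y) ^+ #|I|.-1.
Proof.
pose f i y := c y * (if i == j then (y == x)%:R else 1).
transitivity (\sum_(A : {ffun I -> T}) \prod_i f i (A i)).
  apply: eq_bigr => A _; rewrite (bigD1 j) // [RHS](bigD1 j) //= /f eqxx mulrAC.
  by congr (_ * _); apply: eq_bigr => i /negbTE ->; rewrite mulr1.
rewrite -bigA_distr_bigA (bigD1 j) //= /f eqxx; congr (_ * _).
  rewrite (bigD1 x) //= eqxx mulr1 big1 ?addr0 // => y /negbTE ->.
  by rewrite mulr0.
under eq_bigr => i /negbTE -> do under eq_bigr do rewrite mulr1.
by rewrite prodr_const cardC1.
Qed.

Lemma count_mem_map_enum (I : finType) (T : eqType) (f : I -> T) (x : T) :
  (count_mem x [seq f j | j <- enum I])%:R = \sum_j (f j == x)%:R :> R.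
Proof.
rewrite count_map -sum1_count natr_sum big_enum_cond /= big_mkcond /=.
by apply: eq_bigr => j _; case: ifP.
Qed.

End FfunSums.

Lemma sum_mass_action (T : finType) (R : pzRingType) (net : seq (reaction T R))
    (c : T -> R) :
  all (fun r => size (reactants r) == size (products r)) net ->
  \sum_x mass_action net c x = 0.
Proof.
rewrite /mass_action exchange_big /=; elim: net => [|r net IHnet] /=.
  by rewrite big_nil.
case/andP=> /eqP eq_size /IHnet; rewrite big_cons => ->.
by rewrite addr0 -mulr_sumr sumrB -!natr_sum !sum_count_mem eq_size subrr mulr0.
Qed.

Definition marginal_prod {R : comPzRingType} {n} (C : Part n) (c : Part n -> R)
    (x : Part n) : R :=
  \prod_(X in val C) \sum_(y : Part n | restr (val y) X == restr (val x) X) c y.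

Lemma sum_ffun_glue_eq {R : comPzRingType} {n} (C : Part n) (c : Part n -> R)
    (x : Part n) (j : 'I_#|val C|) :
  \sum_(A : {ffun 'I_#|val C| -> Part n})
     (\prod_i c (A i)) * (glue C A j == x)%:R
  = (refines x C)%:R * marginal_prod C c x.
Proof.
pose f (i : 'I_#|val C|) y :=
  c y * (restr (val y) (blk C i) == restr (val x) (blk C i))%:R.
transitivity (\sum_(A : {ffun 'I_#|val C| -> Part n})
                (refines x C)%:R * \prod_i f i (A (cyc i j))).
  apply: eq_bigr => A _; rewrite glue_eqE -mulnb natrM -prodr_nat_forall mulrCA.
  rewrite /f big_split /=; congr (_ * (_ * _)).
  exact/reindex_inj/cyc_inj.
rewrite -mulr_sumr sum_ffun_prod_inj; last exact: cyc_inj.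
rewrite /marginal_prod -big_blk; congr (_ * _); apply: eq_bigr => i _.
rewrite [RHS]big_mkcond; apply: eq_bigr => y _.
by rewrite /f; case: eqP; rewrite ?mulr1 ?mulr0.
Qed.

Section FragNetwork.
Context {R : numFieldType} {n : nat}.
Hypothesis n_gt0 : (0 < n)%N.
Variable rho : Part n -> R.

Lemma mass_action_frag (c : Part n -> R) (x : Part n) :
  mass_action (frag_network rho) c x =
  \sum_(C : Part n) rho C *
    ((refines x C)%:R * marginal_prod C c x
     - c x * (\sum_y c y) ^+ (#|val C|).-1).
Proof.
rewrite /mass_action /frag_network big_flatten /= big_map big_enum /=.
apply: eq_bigr => C _; rewrite big_map big_enum /=.
have k_neq0 : (#|val C|)%:R != 0 :> R by rewrite pnatr_eq0 -lt0n card_part_gt0.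
under eq_bigr => A _.
  rewrite !count_mem_map_enum big_map big_enum /= -mulrA -sumrB mulr_sumr.
  over.
rewrite -mulr_sumr exchange_big /=.
under eq_bigr => j _.
  under eq_bigr do rewrite mulrBr.
  rewrite sumrB sum_ffun_glue_eq sum_ffun_prod_at card_ord.
  over.
(* the k cyclic shifts j contribute equally, which cancels the rate's 1/k *)
by rewrite sumr_const card_ord mulrnAr -mulrnAl -mulr_natr divfK.
Qed.

Lemma sum_mass_action_frag (c : Part n -> R) :
  \sum_x mass_action (frag_network rho) c x = 0.
Proof.
apply: sum_mass_action; rewrite /frag_network.
elim: (enum _) => //= C Cs IHCs; rewrite all_cat IHCs andbT all_map.
by apply/allP => A _ /=; rewrite !size_map.
Qed.

Lemma frag_rhsE (c : Part n -> R) (x : Part n) :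
  frag_rhs rho c x = mass_action (frag_network rho) c x
    + c x * \sum_(C : Part n) rho C * ((\sum_y c y) ^+ (#|val C|).-1 - 1).
Proof.
rewrite mass_action_frag /frag_rhs [\sum_(B | refines x B) _]big_mkcond /=.
rewrite mulr_sumr -sumrN -!big_split /=.
apply: eq_bigr => C _; rewrite -[\prod_(X in _) _]/(marginal_prod C c x).
move: (marginal_prod C c x) ((\sum_y c y) ^+ _) => g p.
by case: (refines x C) => /=; ring.
Qed.

Definition frag_growth (m : R) : R :=
  m * \sum_(C : Part n) rho C * \sum_(i < (#|val C|).-1) m ^+ i.

Lemma sum_frag_rhs (c : Part n -> R) :
  \sum_x frag_rhs rho c x = (\sum_x c x - 1) * frag_growth (\sum_x c x).
Proof.
under eq_bigr do rewrite frag_rhsE.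
rewrite big_split /= sum_mass_action_frag add0r -mulr_suml /frag_growth.
under eq_bigr do rewrite subrX1 mulrCA.
by rewrite -mulr_sumr mulrCA.
Qed.

End FragNetwork.

From mathcomp Require Import all_classical all_reals all_analysis.
Import numFieldNormedType.Exports.
Local Open Scope classical_set_scope.

Section LinearODE.
Context {R : realType}.

Lemma linear_ode_eq0_cc (D g : R -> R) (T L : R) :
  0 < T -> {within `[0, T], continuous D} -> D 0 = 0 ->
  (forall t, t \in `]0, T[%R -> is_derive t 1 D (D t * g t)) ->
  (forall t, t \in `]0, T[%R -> `|g t| <= L) ->
  D T = 0.
Proof.
move=> T_gt0 cD D0 dD gL.
(* h = D^2 exp(-2 L t) is nonincreasing, as h' = 2 D^2 exp(-2 L t) (g - L). *)
pose k := - (2 * L); pose E (t : R) := expR (k * t).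
pose h (t : R) := D t * D t * E t.
have dlin (t : R) : is_derive t 1 (fun s : R => k * s) k.
  have -> : (fun s : R => k * s) = k *: id by apply/funext => s.
  by apply: is_derive_eq; rewrite scaler1.
have dE (t : R) : is_derive t 1 E (expR (k * t) * k).
  exact: (@is_derive1_comp _ expR (fun t => k * t)).
have dh t : t \in `]0, T[%R ->
    is_derive t 1 h (2 * (D t * D t) * E t * (g t - L)).
  move=> tT; have dDt := dD t tT.
  have -> : h = (D * D) * E by [].
  apply: is_derive_eq; rewrite /E /k /GRing.scale /=.
  have -> : (D * D) t = D t * D t by [].
  ring.
have cE : {within `[0, T], continuous E}.
  apply: continuous_subspaceT => t.
  apply: continuous_comp; last exact: continuous_expR.
  by apply: (@continuousM _ _ (cst _) id); [exact: cst_continuous|].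
have hT0 : h T <= h 0.
  apply: (@ler0_derive1_le_cc _ h 0 T) => //; rewrite ?in_itv /= ?lexx ?ltW //.
  - by move=> t /dh[].
  - move=> t tT; rewrite derive1E; have [_ ->] := dh t tT.
    rewrite mulr_ge0_le0 // ?subr_le0 ?(le_trans (ler_norm _) (gL t tT)) //.
    by rewrite mulr_ge0 ?expR_ge0 // mulr_ge0 // -expr2 sqr_ge0.
  - by move=> t; exact: continuousM (continuousM (cD t) (cD t)) (cE t).
have hT : h T = 0.
  apply/eqP; rewrite eq_le; apply/andP; split.
    by move: hT0; rewrite /h D0 !mul0r.
  by rewrite /h mulr_ge0 ?expR_ge0 // -expr2 sqr_ge0.
by move: hT; rewrite /h /E => /eqP; rewrite !mulf_eq0 expR_eq0 orbF orbb => /eqP.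
Qed.

Lemma linear_ode_eq0 (D g : R -> R) :
  {within `[0, +oo[, continuous D} -> {within `[0, +oo[, continuous g} ->
  D 0 = 0 -> (forall t : R, 0 < t -> is_derive t 1 D (D t * g t)) ->
  forall t : R, 0 < t -> D t = 0.
Proof.
move=> cD cg D0 dD T T_gt0.
have sub : `[0, T] `<=` `[0, +oo[ by apply: subset_itvl; rewrite bnd_simp.
have cgT : {within `[0, T], continuous (fun t => `|g t|)}.
  move=> t; have cgt : {for t, continuous (from_subspace `[0, T] g)}.
    exact: continuous_subspaceW sub cg t.
  exact: continuous_comp cgt (@norm_continuous _ R^o (g t)).
have [t0 _ gt0_max] := EVT_max (ltW T_gt0) cgT.
have cDT := continuous_subspaceW sub cD.
apply: (@linear_ode_eq0_cc D g T `|g t0| T_gt0 cDT D0).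
  by move=> t; rewrite in_itv /= => /andP[t_gt0 _]; apply: dD.
move=> t; rewrite in_itv /= => /andP[t_gt0 tT].
by apply: gt0_max; rewrite in_itv /= !ltW.
Qed.

Lemma solves_mass_eq1 (T : finType) (F : (T -> R) -> T -> R) (phi : R -> R)
    (a : R -> T -> R) :
  continuous phi ->
  (forall c, \sum_x F c x = (\sum_x c x - 1) * phi (\sum_x c x)) ->
  (forall x, {within `[0, +oo[, continuous (fun s => a s x)}) ->
  \sum_x a 0 x = 1 -> solves F a ->
  forall t : R, 0 < t -> \sum_x a t x = 1.
Proof.
move=> cphi sumF ca mass0 sol.
pose M s := \sum_x a s x.
have cM : {within `[0, +oo[, continuous M}.
  by apply: (continuous_big add_continuous) => x _; exact: ca.
have dM (t : R) : 0 < t -> is_derive t 1 M (\sum_x F (a t) x).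
  move=> t_gt0; have -> : M = \sum_x (fun s => a s x) by rewrite fct_sumE.
  elim/big_ind2: _ => [|f df f' df' ? ?|x _]; first exact: is_derive_cst.
    exact: is_deriveD.
  by have [/derivableP + <-] := sol t t_gt0 x.
have D0 := @linear_ode_eq0 (M - cst 1) (phi \o M).
move=> t t_gt0; apply/eqP; rewrite -subr_eq0; apply/eqP/D0 => //.
- move=> s; apply: (@continuousB _ _ _ (from_subspace _ M) (cst 1)).
    exact: cM.
  exact: cst_continuous.
- by move=> s; exact: continuous_comp (cM s) (cphi (M s)).
- by rewrite -[LHS]/(\sum_x a 0 x - 1) mass0 subrr.
- move=> s s_gt0; have dMs := dM s s_gt0.
  by apply: is_derive_eq; rewrite subr0 sumF.
Qed.

End LinearODE.
Arguments solves_mass_eq1 {R T F phi a}.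

Lemma continuous_frag_growth {R : realType} {n} (rho : Part n -> R) :
  continuous (frag_growth rho).
Proof.
rewrite /frag_growth => m; apply: continuousM; first exact: cvg_id.
apply: (continuous_big add_continuous) => C _ y.
apply: continuousM; first exact: cst_continuous.
by apply: (continuous_big add_continuous) => i _; exact: exprn_continuous.
Qed.

Theorem theorem6p1 (R : realType) (n : nat) (hn : (0 < n)%N)
  (rho : Part n -> R) (hrho : forall B, 0 <= rho B)
  (a : R -> Part n -> R)
  (hcont : forall A : Part n, {within `[0, +oo[, continuous (fun s => a s A)})
  (h0 : forall A : Part n,
          a 0 A = (if val A == one_part_set n then 1 else 0)) :
  solves (frag_rhs rho) a <-> solves (mass_action (frag_network rho)) a.
Proof.
have mass0 : \sum_A a 0 A = 1.
  by rewrite (eq_bigr _ (fun A _ => h0 A)) sum_one_part_indicator.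
have fields_eq c : \sum_A c A = 1 ->
    frag_rhs rho c =1 mass_action (frag_network rho) c.
  move=> mass1 A; rewrite frag_rhsE // mass1 big1 ?mulr0 ?addr0 // => C _.
  by rewrite expr1n subrr mulr0.
have mass1_rhs := solves_mass_eq1 (continuous_frag_growth rho)
  (sum_frag_rhs hn rho) hcont mass0.
have mass1_ma : solves (mass_action (frag_network rho)) a ->
    forall t : R, 0 < t -> \sum_A a t A = 1.
  apply: (solves_mass_eq1 (phi := cst 0) (@cst_continuous _ _ 0) _ hcont mass0).
  by move=> c; rewrite sum_mass_action_frag /= mulr0.
split=> sol t t_gt0 A; have [dA ->] := sol t t_gt0 A; split=> //.
  by rewrite fields_eq ?mass1_rhs.
by rewrite -fields_eq ?mass1_ma.
Qed.
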